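(* For $n\ge1$, $q\in\mathbb{C}$ and indeterminates $z_1,\dots,z_n$, $$\sum_{\sigma\in\mathbb{S}_n}\mathrm{sgn}(\sigma)\prod_{1\le i<j\le n}\big(z_{\sigma(j)}-qz_{\sigma(i)}-(1-q)z_{\sigma(i)}z_{\sigma(j)}\big)=[n]_q!\prod_{1\le i<j\le n}(z_j-z_i).$$
   Context: $[k]_q=1+q+\cdots+q^{k-1}$ and $[n]_q!=[1]_q[2]_q\cdots[n]_q$. *)

From HB Require Import structures.
From mathcomp Require Import all_boot all_order all_algebra all_fingroup.
Set Implicit Arguments. Unset Strict Implicit. Unset Printing Implicit Defensive.
Import GRing.Theory.
Local Open Scope ring_scope.

Definition qint (R : comNzRingType) (q : R) (k : nat) : R := \sum_(i < k) q ^+ i.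

Definition qfact (R : comNzRingType) (q : R) (n : nat) : R :=
  \prod_(i < n) qint q i.+1.

From HB Require Import structures.
From mathcomp Require Import all_boot all_order all_algebra all_fingroup.
From mathcomp Require Import ring zify.
Import GRing.Theory.
Local Open Scope ring_scope.

(* Writing x = z and y = 1 - z, the factor of the theorem is the bihomogeneous
   form  x_b y_a - q x_a y_b  (called qform below), and the right-hand side
   product is the determinant of the "homogeneous Vandermonde" matrix
   hvdm x y = (x_v^k y_v^(n-1-k))_(k,v).  The proof has three parts.
   1. Structure: for arbitrary x, y in a commutative ring, the signed sum
      (antisymmetrization) of prod_(i<j) qform x y q (s i) (s j) equals
      qconst n q * det (hvdm x y), where qconst n q is a universal constant.
      This follows by expanding the product into monomials: every monomial is
      prod_k x_(s k)^e_k y_(s k)^(n-1-e_k), whose antisymmetrization is the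
      determinant of a row selection of hvdm x y.
   2. Recursion: specializing x_n = 1, y_n = 0 and y_a = 1 (a < n), the
      antisymmetrization factors as [n+1]_q times the one for n variables,
      while det (hvdm x y) is unchanged.  Over the polynomial ring R[X] with
      x_a = X^a the determinant is monic, hence regular, so qconst satisfies
      qconst (n+1) q = [n+1]_q qconst n q, and qconst n q = [n]_q!.
   3. For y = 1 - z the matrix hvdm z (1 - z) is a unitriangular change of
      basis of the Vandermonde matrix of z, whose determinant is known. *)

Set Implicit Arguments. Unset Strict Implicit.

Lemma lift_ltn n (p : 'I_n.+1) (a b : 'I_n) : (lift p a < lift p b)%N = (a < b)%N.
Proof. by rewrite !ltnNge leq_bump2. Qed.

Lemma ltn_lift n (p : 'I_n.+1) (b : 'I_n) : (p < lift p b)%N = (p <= b)%N.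
Proof.
rewrite /= /bump; case: (leqP p b) => [le_pb|lt_bp] /=; first by rewrite add1n ltnS le_pb.
by rewrite add0n; apply/negbTE; rewrite -leqNgt ltnW.
Qed.

Section Antisymmetrization.
Variable R : comNzRingType.

Definition antisym n (F : 'I_n -> 'I_n -> R) : R :=
  \sum_(s : 'S_n) (-1) ^+ s *
    \prod_(i < n) \prod_(j < n | (i < j)%N) F (s i) (s j).

Definition qform n (x y : 'I_n -> R) (q : R) (a b : 'I_n) : R :=
  x b * y a - q * x a * y b.

Definition hvdm n (x y : 'I_n -> R) : 'M[R]_n :=
  \matrix_(k, v) (x v ^+ k * y v ^+ (n.-1 - k)).

(* A choice function
   f : {ffun 'I_n * 'I_n -> bool} selects, for each pair p = (i, j) with i < j,
   the term x_(s j) y_(s i) (f p = true, coefficient 1) or the term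
   x_(s i) y_(s j) (f p = false, coefficient -q).  A pair with i >= j has the
   weights 1 (true) and 0 (false), so it contributes the trivial factor 1. *)
Section Expansion.
Variables (n : nat) (q : R).
Implicit Types (x y : 'I_n -> R) (s : 'S_n) (p : 'I_n * 'I_n) (k : 'I_n).
Implicit Type f : {ffun 'I_n * 'I_n -> bool}.

Definition choice_coef p (b : bool) : R :=
  if (p.1 < p.2)%N then (if b then 1 else - q) else b%:R.

Definition xvert p (b : bool) : 'I_n := if b then p.2 else p.1.
Definition yvert p (b : bool) : 'I_n := if b then p.1 else p.2.

Definition xmult k p (b : bool) : nat := (p.1 < p.2)%N && (k == xvert p b).
Definition ymult k p (b : bool) : nat := (p.1 < p.2)%N && (k == yvert p b).

Definition xdeg f k : nat := (\sum_(p : 'I_n * 'I_n) xmult k p (f p))%N.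

Definition select_mx f : 'M[R]_n := \matrix_(k, e) ((e : nat) == xdeg f k)%:R.

Definition qconst : R :=
  \sum_(f : {ffun 'I_n * 'I_n -> bool})
    (\prod_(p : 'I_n * 'I_n) choice_coef p (f p)) * \det (select_mx f).

Lemma count_pairs k :
  (\sum_(p : 'I_n * 'I_n) ((p.1 < p.2)%N && ((k == p.1) || (k == p.2)) : nat))%N = n.-1.
Proof.
rewrite -(pair_bigA _ (fun i j : 'I_n => ((i < j)%N && ((k == i) || (k == j)) : nat))) /=.
rewrite (bigD1 k) //=; under eq_bigr do rewrite eqxx andbT.
under [X in (_ + X)%N]eq_bigr => i nik.
  rewrite (bigD1 k) //= eqxx orbT andbT big1 ?addn0 => [|j njk]; last first.
    by rewrite eq_sym (negbTE nik) eq_sym (negbTE njk) andbF.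
  over.
have -> : (\sum_(i < n | i != k) (i < k)%N = \sum_(i < n) (i < k)%N)%N.
  by rewrite [RHS](bigD1 k) //= ltnn.
have -> : n.-1 = #|predC1 k| by rewrite cardC1 card_ord.
rewrite -big_split -sum1_card [RHS]big_mkcond /=.
by apply: eq_bigr => i _; rewrite inE -val_eqE neq_ltn orbC; case: ltngtP.
Qed.

Lemma xmult_add_ymult k p b :
  (xmult k p b + ymult k p b)%N = ((p.1 < p.2)%N && ((k == p.1) || (k == p.2))).
Proof.
rewrite /xmult /ymult /xvert /yvert; case: ltnP => //= lt12.
have ne12 : p.1 != p.2 by rewrite -val_eqE neq_ltn lt12.
by case: b; have [->|nk1] := eqVneq k p.1; rewrite ?(negbTE ne12) ?addn0.
Qed.

Lemma xdeg_add_ydeg f k : (xdeg f k + \sum_(p : 'I_n * 'I_n) ymult k p (f p))%N = n.-1.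
Proof.
rewrite /xdeg -big_split -(count_pairs k).
by apply: eq_bigr => p _; exact: xmult_add_ymult.
Qed.

Lemma xdeg_lt f k : (xdeg f k < n)%N.
Proof. by have := xdeg_add_ydeg f k; have := ltn_ord k; lia. Qed.

Definition choice_term x y s p (b : bool) : R :=
  choice_coef p b * \prod_k (x (s k) ^+ xmult k p b * y (s k) ^+ ymult k p b).

Lemma prod_pow_eq (a : 'I_n -> R) v : \prod_k a k ^+ (k == v) = a v.
Proof. by rewrite (bigD1 v) //= eqxx big1 ?mulr1 // => k /negbTE ->. Qed.

Lemma sum_choice_term x y s p :
  \sum_(b : bool) choice_term x y s p b =
    if (p.1 < p.2)%N then qform x y q (s p.1) (s p.2) else 1.
Proof.
rewrite big_bool /choice_term /choice_coef /xmult /ymult.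
case: ltnP => //= _; last by rewrite !big1 ?mulr1 ?addr0 // => k _; rewrite mulr1.
by rewrite !big_split !prod_pow_eq /= /qform; ring.
Qed.

Lemma expand_qform_prod x y s :
  \prod_(i < n) \prod_(j < n | (i < j)%N) qform x y q (s i) (s j) =
  \sum_(f : {ffun 'I_n * 'I_n -> bool}) (\prod_(p : 'I_n * 'I_n) choice_coef p (f p)) *
         \prod_k (x (s k) ^+ xdeg f k * y (s k) ^+ (n.-1 - xdeg f k)).
Proof.
under eq_bigr do rewrite big_mkcond.
rewrite pair_bigA (eq_bigr _ (fun p _ => esym (sum_choice_term x y s p))).
rewrite bigA_distr_bigA /=; apply: eq_bigr => f _.
rewrite big_split /=; congr (_ * _); rewrite exchange_big /=.
apply: eq_bigr => k _; rewrite big_split /= !prodrXr.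
by rewrite -(xdeg_add_ydeg f k) addKn.
Qed.

Lemma select_mxE x y f :
  \matrix_(k, v) (x v ^+ xdeg f k * y v ^+ (n.-1 - xdeg f k))
  = select_mx f *m hvdm x y.
Proof.
apply/matrixP => k v; rewrite !mxE.
under eq_bigr do rewrite !mxE mulr_natl mulrb.
by rewrite -big_mkcond (big_pred1 (Ordinal (xdeg_lt f k))) ?mxE.
Qed.

Lemma antisym_qform x y : antisym (qform x y q) = qconst * \det (hvdm x y).
Proof.
rewrite /antisym; under eq_bigr do rewrite expand_qform_prod big_distrr /=.
rewrite exchange_big /= /qconst big_distrl /=; apply: eq_bigr => f _.
under eq_bigr do rewrite mulrCA.
rewrite -mulrA -det_mulmx -select_mxE -big_distrr /=; congr (_ * _).
by apply: eq_bigr => s _; congr (_ * _); apply: eq_bigr => k _; rewrite mxE.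
Qed.

End Expansion.

(* Summing over the permutations sending i0 to j0 is summing over 'S_n via
   the lift of permutations; the inverse bijection sends s to
   k |-> unlift (s i0) (s (lift i0 k)). *)
Lemma sum_lift_perm n (G : 'S_n.+1 -> R) (i0 j0 : 'I_n.+1) :
  \sum_(s : 'S_n.+1 | s i0 == j0) G s = \sum_(s : 'S_n) G (lift_perm i0 j0 s).
Proof.
rewrite (reindex (lift_perm i0 j0)); last first.
  pose restr i (s : 'S_n.+1) k := odflt k (unlift (s i) (s (lift i k))).
  have restrK i (s : 'S_n.+1) k : lift (s i) (restr i s k) = s (lift i k).
    rewrite /restr; have := neq_lift i k.
    by rewrite -(can_eq (permK s)) => /unlift_some[] ? ? ->.
  have inj_restr : injective (restr i0 _).
    move=> s; apply: can_inj (restr (s i0) s^-1%g) _ => k'.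
    by rewrite {1}/restr restrK !permK liftK.
  exists (fun s => perm (inj_restr s)) => [s _ | s].
    by apply/permP=> k'; rewrite permE /restr lift_perm_lift lift_perm_id liftK.
  move/(s _ =P _) => si0; apply/permP=> k.
  case: (unliftP i0 k) => [k'|] ->; rewrite ?lift_perm_id //.
  by rewrite lift_perm_lift -si0 permE restrK.
by apply: eq_bigl => s; rewrite lift_perm_id eqxx.
Qed.

Lemma prod_if_leq (c : R) m p :
  \prod_(b < m) (if (p <= b)%N then c else 1) = c ^+ (m - p).
Proof.
elim: m => [|m IH]; first by rewrite big_ord0 sub0n expr0.
rewrite big_ord_recr /= IH; case: (leqP p m) => h; first by rewrite subSn // exprSr.
rewrite mulr1.
have /eqP -> : (m.+1 - p == 0)%N by rewrite subn_eq0.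
by have /eqP -> : (m - p == 0)%N by rewrite subn_eq0 ltnW.
Qed.

(* Kernels whose values at the last vertex are those of qform x y q for
   x_n = 1, y_n = 0 and y_a = 1 (a < n). *)
Section LastVertex.
Variables (n : nat) (F : 'I_n.+1 -> 'I_n.+1 -> R) (q : R).
Hypothesis F_to_max : forall a, F (lift ord_max a) ord_max = 1.
Hypothesis F_from_max : forall b, F ord_max (lift ord_max b) = - q.

Lemma prod_lift_perm (p : 'I_n.+1) (s : 'S_n) :
  \prod_(i < n.+1) \prod_(j < n.+1 | (i < j)%N)
     F (lift_perm p ord_max s i) (lift_perm p ord_max s j) =
  (- q) ^+ (n - p) * \prod_(a < n) \prod_(b < n | (a < b)%N)
     F (lift ord_max (s a)) (lift ord_max (s b)).
Proof.
rewrite (bigD1_ord p) //=; congr (_ * _).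
  rewrite big_mkcond (bigD1_ord p) //= ltnn mul1r lift_perm_id.
  rewrite -(prod_if_leq _ n p); apply: eq_bigr => b _.
  by rewrite ltn_lift lift_perm_lift F_from_max.
apply: eq_bigr => a _.
rewrite big_mkcond (bigD1_ord p) //= lift_perm_id lift_perm_lift F_to_max.
rewrite if_same mul1r [RHS]big_mkcond; apply: eq_bigr => b _.
by rewrite lift_ltn lift_perm_lift.
Qed.

Lemma sum_position_weights :
  \sum_(p < n.+1) (-1) ^+ odd p * (-1) ^+ odd n * (- q) ^+ (n - p) = qint q n.+1.
Proof.
rewrite /qint (reindex_inj rev_ord_inj) /=; apply: eq_bigr => p _.
have hp : (p <= n)%N by rewrite -ltnS.
rewrite subSS (subKn hp) (exprNn q) -[(-1) ^+ p]signr_odd mulrA -!signr_addb.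
by rewrite oddB // addbAC addbK addbb mul1r.
Qed.

(* Antisymmetrization recursion: sort the permutations by the position of
   the maximum. *)
Lemma antisym_last :
  antisym F = qint q n.+1 * antisym (fun a b => F (lift ord_max a) (lift ord_max b)).
Proof.
rewrite /antisym (partition_big (fun s : 'S_n.+1 => (s^-1)%g ord_max) predT) //=.
rewrite -sum_position_weights big_distrl /=; apply: eq_bigr => p _.
rewrite (eq_bigl (fun s : 'S_n.+1 => s p == ord_max)); last first.
  by move=> s /=; apply/eqP/eqP => [<-|<-]; rewrite ?permKV ?permK.
rewrite sum_lift_perm big_distrr /=; apply: eq_bigr => s _.
rewrite prod_lift_perm odd_lift_perm (signr_addb _ (_ (+) _)) (signr_addb _ (odd p)).
by rewrite -!mulrA; congr (_ * (_ * _)); rewrite mulrCA.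
Qed.

End LastVertex.

(* With x_n = 1, y_n = 0 and y_a = 1 otherwise, the last column of the
   homogeneous Vandermonde matrix is a unit vector. *)
Lemma det_hvdm_last n (x y : 'I_n.+1 -> R) :
  x ord_max = 1 -> y ord_max = 0 -> (forall a, y (lift ord_max a) = 1) ->
  \det (hvdm x y) = \det (hvdm (fun a => x (lift ord_max a)) (fun a => y (lift ord_max a))).
Proof.
move=> x_max y_max y_lift.
rewrite (expand_det_col _ ord_max) (bigD1 ord_max) //= big1 ?addr0 => [|i ni].
  rewrite !mxE x_max y_max subnn expr0 expr1n mulr1 mul1r /cofactor.
  rewrite addnn -signr_odd odd_double expr0 mul1r; congr (\det _).
  by apply/matrixP => a b; rewrite !mxE !y_lift !expr1n !mulr1 lift_max.
have lt_in : (i < n)%N by rewrite ltn_neqAle -ltnS ltn_ord andbT; rewrite -val_eqE in ni.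
by rewrite !mxE y_max expr0n subn_eq0 leqNgt lt_in /= mulr0 mul0r.
Qed.

End Antisymmetrization.

Lemma rmorph_qconst (R S : comNzRingType) (f : {rmorphism R -> S}) n (q : R) :
  f (qconst n q) = qconst n (f q).
Proof.
rewrite rmorph_sum; apply: eq_bigr => c _; rewrite rmorphM rmorph_prod -det_map_mx.
congr (_ * _); last by congr (\det _); apply/matrixP => i j; rewrite !mxE rmorph_nat.
apply: eq_bigr => p _; rewrite /choice_coef.
by case: ifP => _; case: (c p); rewrite ?rmorph1 ?rmorphN ?rmorph_nat.
Qed.

Lemma rmorph_qint (R S : comNzRingType) (f : {rmorphism R -> S}) (q : R) k :
  f (qint q k) = qint (f q) k.
Proof. by rewrite rmorph_sum; apply: eq_bigr => i _; rewrite rmorphXn. Qed.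

(* The homogeneous Vandermonde determinant of (X^a, 1) is monic, hence regular. *)
Lemma lreg_det_hvdm_Xn (R : comNzRingType) n :
  GRing.lreg (\det (hvdm (fun a : 'I_n => ('X^a : {poly R})) (fun _ => 1))).
Proof.
have -> : hvdm (fun a : 'I_n => ('X^a : {poly R})) (fun _ => 1) = Vandermonde n (\row_a 'X^a).
  by apply/matrixP => i j; rewrite !mxE expr1n mulr1 exprAC.
rewrite det_Vandermonde; apply/monic_lreg/monic_prod => i _.
apply: monic_prod => j lt_ij; rewrite !mxE.
have -> : ('X^j - 'X^i : {poly R}) = 'X^i * ('X^(j - i) - 1%:P).
  by rewrite mulrBr polyC1 mulr1 -exprD subnKC // ltnW.
by rewrite monicMl ?monicXn // monicXnsubC // subn_gt0.
Qed.

(* For n = 0 the antisymmetrization and the determinant are empty products. *)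
Lemma qconst0 (R : comNzRingType) (q : R) : qconst 0 q = 1.
Proof.
have := antisym_qform q (fun _ : 'I_0 => 1) (fun _ => 1).
rewrite det_mx00 mulr1 => <-.
transitivity (\det (0 : 'M[R]_0)); last exact: det_mx00.
by apply: eq_bigr => s _; rewrite !big_ord0.
Qed.

Lemma qconstS (R : comNzRingType) n (q : R) :
  qconst n.+1 q = qint q n.+1 * qconst n q.
Proof.
apply: (@polyC_inj R); rewrite rmorphM !rmorph_qconst rmorph_qint /=.
pose x (v : 'I_n.+1) : {poly R} := if unlift ord_max v is Some a then 'X^a else 1.
pose y (v : 'I_n.+1) : {poly R} := if unlift ord_max v is Some a then 1 else 0.
have x_max : x ord_max = 1 by rewrite /x unlift_none.
have y_max : y ord_max = 0 by rewrite /y unlift_none.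
have x_lift a : x (lift ord_max a) = 'X^a by rewrite /x liftK.
have y_lift a : y (lift ord_max a) = 1 by rewrite /y liftK.
set D := \det (hvdm (fun a : 'I_n => ('X^a : {poly R})) (fun _ => 1)).
have D_lift : D = \det (hvdm (fun a => x (lift ord_max a)) (fun a => y (lift ord_max a))).
  by congr (\det _); apply/matrixP => i j; rewrite !mxE x_lift y_lift.
have D_full : D = \det (hvdm x y) by rewrite D_lift det_hvdm_last.
apply: (@lreg_det_hvdm_Xn R n); rewrite -/D mulrC mulrCA [D * _]mulrC.
rewrite {1}D_full D_lift -!antisym_qform.
by apply: antisym_last => [a|b]; rewrite /qform x_max y_max y_lift; ring.
Qed.

Lemma qconst_qfact (R : comNzRingType) n (q : R) : qconst n q = qfact q n.
Proof.
elim: n => [|n IH]; first by rewrite qconst0 /qfact big_ord0.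
by rewrite qconstS IH /qfact big_ord_recr /= mulrC.
Qed.

(* For y = 1 - x the homogeneous Vandermonde matrix is T * Vandermonde, with
   T the coefficient matrix of the polynomials (1 - X)^(n-1-k) X^k, which is
   upper unitriangular. *)
Lemma det_hvdm_compl (R : comNzRingType) n (z : 'I_n -> R) :
  \det (hvdm z (fun v => 1 - z v)) = \prod_(i < n) \prod_(j < n | (i < j)%N) (z j - z i).
Proof.
pose pk (k : 'I_n) : {poly R} := (1 - 'X) ^+ (n.-1 - k) * 'X^k.
have size_pk k : (size (pk k) <= n)%N.
  have size_1X : size (1 - 'X : {poly R}) = 2 by rewrite -opprB size_polyN -polyC1 size_XsubC.
  rewrite (leq_trans (size_polyMleq _ _)) // size_polyXn addnS /=.
  rewrite (leq_trans (leq_add (size_poly_exp_leq _ _) (leqnn k))) // size_1X mul1n.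
  by have := ltn_ord k; lia.
pose T : 'M[R]_n := \matrix_(k, e) (pk k)`_e.
have -> : hvdm z (fun v => 1 - z v) = T *m Vandermonde n (\row_v z v).
  apply/matrixP => k v; rewrite !mxE; under eq_bigr do rewrite !mxE.
  by rewrite -(horner_coef_wide (z v) (size_pk k)) /pk !hornerE mulrC.
rewrite det_mulmx det_Vandermonde -det_tr det_trig; last first.
  by apply/is_trig_mxP => i j lt_ij; rewrite !mxE /pk coefMXn lt_ij.
rewrite big1 ?mul1r => [|k _].
  by apply: eq_bigr => i _; apply: eq_bigr => j _; rewrite !mxE.
rewrite !mxE /pk coefMXn ltnn subnn -horner_coef0.
by rewrite horner_exp !hornerE subr0 expr1n.
Qed.

Unset Implicit Arguments. Set Strict Implicit.

Theorem lemma4 (R : comNzRingType) (n : nat) (hn : (1 <= n)%N) (q : R)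
    (z : 'I_n -> R) :
  \sum_(s : 'S_n) (-1) ^+ s *
     \prod_(i < n) \prod_(j < n | (i < j)%N)
        (z (s j) - q * z (s i) - (1 - q) * z (s i) * z (s j))
  = qfact q n * \prod_(i < n) \prod_(j < n | (i < j)%N) (z j - z i).
Proof.
rewrite -det_hvdm_compl -qconst_qfact -antisym_qform.
apply: eq_bigr => s _; congr (_ * _).
by apply: eq_bigr => i _; apply: eq_bigr => j _; rewrite /qform; ring.
Qed.
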